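(* Consider a position in the Strong Ramsey game $\mathcal{R}(K_{\aleph_0}^{(3)}, \hat{K}_{2,4}^{(3)})$ in which $P_2$ has claimed all edges of a copy of $\hat{K}_{2,3}^{(3)}$ with main vertices $x,y$ and center $c$, and suppose that (i) $P_1$ does not have a threat; (ii) $P_1$ has not claimed all edges of a copy of $\hat{K}_{2,3}^{(3)}$ whose center is $c$ and one of whose main vertices is $x$; (iii) $P_1$ has not claimed all edges of a copy of $\hat{K}_{2,3}^{(3)}$ whose center is $x$ and one of whose main vertices is $c$. If it is $P_2$'s turn, then $P_2$ has a strategy from this position guaranteeing that $P_1$ never claims all edges of a copy of $\hat{K}_{2,4}^{(3)}$ (a drawing strategy).
   Context: Strong Ramsey game $\mathcal{R}(B,G)$: players $P_1$, $P_2$ alternately claim unclaimed edges of the $k$-uniform hypergraph $B$, $P_1$ first; the first to claim all edges of a copy of the finite $k$-uniform hypergraph $G$ wins; if nobody does so in finitely many moves the game is a draw. $K_{\aleph_0}^{(3)}$ is the complete $3$-uniform hypergraph on a countably infinite vertex set. $\hat{K}_{2,l}$ ($l\ge3$) is $K_{2,l}$ plus the edge joining its two vertices of degree $l$. For a graph $H$, $H^{(3)}$ is the $3$-uniform hypergraph obtained by adding one fixed new vertex $c$ (the center) to every edge of $H$. Main vertices of $\hat{K}_{2,l}^{(3)}$: the two vertices of degree $l+1$ in $\hat K_{2,l}$ (degree at least 3); a copy of $\hat{K}_{2,3}^{(3)}$ ''with main vertices $x,y$ and center $c$'' is one whose center is $c$ and whose main vertices are $x,y$. $P_1$ has a threat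 if she has claimed all edges of a copy of $\hat{K}_{2,4}^{(3)}$ minus one edge $e$, where the edge of the board corresponding to $e$ is claimed by neither player. *)

From mathcomp Require Import all_boot finmap.
Set Implicit Arguments. Unset Strict Implicit. Unset Printing Implicit Defensive.
Local Open Scope fset_scope.

(* Board: complete 3-uniform hypergraph on vertex set nat; an edge is a
   3-element finite set of naturals. *)
Definition edge3 (e : {fset nat}) : Prop := #|` e| = 3.

(* The graph \hat K_{2,l} on 'I_(l+2): vertices 0 and 1 are the two vertices
   of degree l+1 (the "main vertices"); edges {0,1} and {0,j},{1,j} for j>=2. *)
Definition khat (l : nat) : rel 'I_(l.+2) :=
  fun u v => (u != v) && ((val u < 2) || (val v < 2)).

Arguments khat l : clear implicits.

Definition main0 (l : nat) : 'I_(l.+2) := ord0.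
Definition main1 (l : nat) : 'I_(l.+2) := lift ord0 ord0.
Arguments main0 l : clear implicits.
Arguments main1 l : clear implicits.

(* f (with center c) is a copy of H^(3) all of whose edges lie in S:
   c together with the injective image of V are distinct vertices, and every
   hyperedge {c, f u, f v} (uv an edge of H) belongs to S. *)
Definition cone_copy (V : finType) (H : rel V) (S : {fset nat} -> Prop)
  (c : nat) (f : V -> nat) : Prop :=
  injective f /\ (forall v, f v <> c) /\
  (forall u v, H u v -> S [fset c; f u; f v]).

Definition threat (A B : {fset {fset nat}}) : Prop :=
  exists (c : nat) (f : 'I_(4.+2) -> nat) (e : {fset nat}),
    injective f /\ (forall v, f v <> c) /\
    (exists u v, khat 4 u v /\ e = [fset c; f u; f v]) /\
    e \notin A /\ e \notin B /\
    (forall u v, khat 4 u v -> [fset c; f u; f v] <> e ->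
                 [fset c; f u; f v] \in A).

Definition has_K24 (S : {fset nat} -> Prop) : Prop :=
  exists c (f : 'I_(4.+2) -> nat), cone_copy (khat 4) S c f.

(* P2 uses the strategy
   [str], which maps the list of P1's moves made so far (after the position)
   to P2's next move; P1 plays the sequence [p].  Order: b_0, p_0, b_1, p_1,...
   where b_i = str [p_0;...;p_(i-1)]. *)
Definition p2move (str : seq {fset nat} -> {fset nat}) (p : nat -> {fset nat})
  (i : nat) : {fset nat} := str (mkseq p i).

Definition ownA (A : {fset {fset nat}}) (p : nat -> {fset nat}) (k : nat)
  (e : {fset nat}) : Prop := e \in A \/ exists2 i, i < k & p i = e.

Definition ownB (B : {fset {fset nat}}) str p (k : nat) (e : {fset nat}) : Prop :=
  e \in B \/ exists2 i, i < k & p2move str p i = e.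

Definition legal2 A B str p (i : nat) : Prop :=
  edge3 (p2move str p i) /\ ~ ownA A p i (p2move str p i) /\
  ~ ownB B str p i (p2move str p i).

(* P1's i-th move is legal (P1 has made i moves, P2 has made i+1 moves). *)
Definition legal1 A B str p (i : nat) : Prop :=
  edge3 (p i) /\ ~ ownA A p i (p i) /\ ~ ownB B str p i.+1 (p i).

(* [str] is a drawing strategy for P2 from (A,B): against every legal
   sequence of P1's moves, while the game is still running (nobody has yet
   claimed a copy of \hat K_{2,4}^{(3)}), P2's move is legal, and P1's
   answer never completes a copy of \hat K_{2,4}^{(3)} (unless P2 has
   already won by her own move, which ends the game). *)
Definition drawing_strategy (A B : {fset {fset nat}})
  (str : seq {fset nat} -> {fset nat}) : Prop :=
  forall (p : nat -> {fset nat}) (k : nat),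
    (forall i, i < k -> legal1 A B str p i) ->
    ~ has_K24 (ownA A p k) -> ~ has_K24 (ownB B str p k) ->
    legal2 A B str p k /\
    (~ has_K24 (ownB B str p k.+1) -> legal1 A B str p k ->
     ~ has_K24 (ownA A p k.+1)).

From mathcomp Require Import all_boot finmap zify.
From Stdlib Require Import Classical.
Local Open Scope fset_scope.

(* P2 attacks by claiming [c; y; w] for a vertex w never used before: with her
   copy of K_{2,3}^(3) this threatens [c; x; w], which would make w a fifth
   leaf.  If P1 ever fails to claim [c; x; w] at once, P2 claims it and wins.
   If P1 always answers, each new edge of hers contains a vertex lying in no
   other edge of hers.  In a copy of K_{2,4}^(3) missing one edge, such a vertex
   can only be a leaf whose other edge is the missing one; deleting the leaf
   leaves a copy of K_{2,3}^(3) centred at c with main vertex x, or centred at x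
   with main vertex c, which (ii) and (iii) forbid -- and a vertex of degree one
   cannot create such a copy either.  So P1 never gets a threat, and since she
   must always answer, she never completes a copy. *)

Lemma in_fset3 (a b d z : nat) :
  (z \in [fset a; b; d]) = [|| z == a, z == b | z == d].
Proof. by rewrite !inE orbA. Qed.

Lemma fset31 (a b d : nat) : a \in [fset a; b; d].
Proof. by rewrite in_fset3 eqxx. Qed.

Lemma fset33 (a b d : nat) : d \in [fset a; b; d].
Proof. by rewrite in_fset3 eqxx !orbT. Qed.

Lemma fset3C (a b d : nat) : [fset a; b; d] = [fset a; d; b].
Proof. by apply/fsetP => z; rewrite !in_fset3 (orbC (z == b)). Qed.

Lemma cardfs3 {a b d : nat} :
  a != b -> a != d -> b != d -> #|` [fset a; b; d]| = 3.
Proof.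
move=> ab ad bd; rewrite fsetUC cardfsU1 cardfs2 ab.
by rewrite !inE negb_or eq_sym ad eq_sym bd.
Qed.

Lemma fset3_inj {a b d d' : nat} :
  d != a -> d != b -> [fset a; b; d] = [fset a; b; d'] -> d = d'.
Proof.
move=> da db E; have := fset33 a b d.
by rewrite E in_fset3 (negbTE da) (negbTE db) => /eqP.
Qed.

Lemma fset3_pair {a b d u v : nat} :
  u \in [fset a; b; d] -> v \in [fset a; b; d] -> u != d -> v != d -> u != v ->
  (u = a /\ v = b) \/ (u = b /\ v = a).
Proof.
by rewrite !in_fset3 => /or3P[]/eqP-> /or3P[]/eqP->; rewrite ?eqxx //; auto.
Qed.

Lemma three_in_pair {T : Type} {a b d p q : T} :
  a <> b -> a <> d -> b <> d ->
  a = p \/ a = q -> b = p \/ b = q -> d = p \/ d = q -> False.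
Proof. by move=> ab ad bd [] ? [] ? [] ?; subst. Qed.

Lemma khat_sym {l} (u v : 'I_l.+2) : khat l u v = khat l v u.
Proof. by rewrite /khat eq_sym orbC. Qed.

Lemma khat_neq {l} {u v : 'I_l.+2} : khat l u v -> u != v.
Proof. by case/andP. Qed.

Lemma khat_main_leaf {l} {u v : 'I_l.+2} : val u < 2 -> 1 < val v -> khat l u v.
Proof.
move=> hu hv; rewrite /khat hu andbT.
by apply: contraTneq hu => ->; rewrite -leqNgt.
Qed.

Lemma main_cases {l} {u : 'I_l.+2} : val u < 2 -> u = main0 l \/ u = main1 l.
Proof. by case: u => [[|[|//]]] hu _; [left | right]; apply: val_inj. Qed.

Lemma khat_two_nbrs {l} (t : 'I_l.+3) :
  exists a b, [/\ a != b, khat l.+1 t a & khat l.+1 t b].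
Proof.
have leaf : 1 < val (inord 2 : 'I_l.+3) by rewrite /= inordK.
case: (ltnP (val t) 2) => ht; last first.
  by exists (main0 l.+1), (main1 l.+1); rewrite !(khat_sym t) !khat_main_leaf.
set b := if val t == 0 then main1 l.+1 else main0 l.+1.
have hb : val b < 2 by rewrite /b; case: ifP.
exists (inord 2), b; split.
- by apply: contraTneq leaf => ->; rewrite -leqNgt.
- exact: khat_main_leaf.
- rewrite /khat ht andbT -val_eqE /b; case: ifP => [/eqP -> //|/negbT].
  by rewrite eq_sym.
Qed.

Lemma val_lift_lt {n} (t : 'I_n.+1) (i : 'I_n) :
  val i < val t -> val (lift t i) = val i.
Proof. by move=> it; rewrite /= /bump leqNgt it. Qed.

Lemma lift_main0 {l} {t : 'I_l.+3} : 1 < val t -> lift t (main0 l) = main0 l.+1.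
Proof. by move=> ht; apply: val_inj; rewrite val_lift_lt //; apply: ltnW. Qed.

Lemma lift_main1 {l} {t : 'I_l.+3} : 1 < val t -> lift t (main1 l) = main1 l.+1.
Proof. by move=> ht; apply: val_inj; rewrite val_lift_lt. Qed.

Lemma khat_lift {l} {t : 'I_l.+3} {i j : 'I_l.+2} :
  1 < val t -> khat l i j -> khat l.+1 (lift t i) (lift t j).
Proof.
move=> ht /andP[ij small]; rewrite /khat (inj_eq (@lift_inj _ t)) ij.
case/orP: small => s; [rewrite (val_lift_lt t i) | rewrite (val_lift_lt t j)];
  by rewrite ?s ?orbT // (leq_trans s).
Qed.

Lemma khatE {l} (u v : 'I_l.+2) :
  khat l u v =
  (nat_of_ord u != nat_of_ord v) && ((nat_of_ord u < 2) || (nat_of_ord v < 2)).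
Proof. by []. Qed.

Lemma khat_lift_max {l} (u v : 'I_l.+2) :
  khat l.+1 (lift ord_max u) (lift ord_max v) = khat l u v.
Proof. by rewrite !khatE !lift_max. Qed.

Lemma cone_copy_mono {V : finType} {H : rel V} {S S' : {fset nat} -> Prop} {c f} :
  (forall e, S e -> S' e) -> cone_copy H S c f -> cone_copy H S' c f.
Proof. by move=> SS' [fi [fc Hf]]; split=> //; split=> // u v /Hf /SS'. Qed.

Lemma cone_edge_inj {V : finType} {c} {f : V -> nat} {u a b} :
  injective f -> (forall v, f v <> c) -> a != u ->
  [fset c; f u; f a] = [fset c; f u; f b] -> a = b.
Proof.
move=> fi fc au E; apply: (fi); apply: fset3_inj E; first exact/eqP/fc.
by rewrite (inj_eq fi).
Qed.

Lemma cone_copy_fresh {l} {S : {fset nat} -> Prop} {X : {fset nat}} {w c : nat}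
    {g : 'I_l.+3 -> nat} :
  (forall e, S e -> w \notin e) -> w \in X -> w != c ->
  cone_copy (khat l.+1) (fun e => S e \/ e = X) c g -> cone_copy (khat l.+1) S c g.
Proof.
move=> Sw wX wc [gi [gc Hg]]; split=> //; split=> // u v uv.
have edge_X t z : w = g t -> khat l.+1 t z -> [fset c; g t; g z] = X.
  by move=> wt tz; case: (Hg t z tz) => // /Sw; rewrite in_fset3 -wt eqxx orbT.
have not_vertex t : w <> g t.
  move=> wt; have [a [b [ab ta tb]]] := khat_two_nbrs t.
  apply: (negP ab); apply/eqP/(cone_edge_inj (u := t) gi gc).
    by rewrite eq_sym (khat_neq ta).
  by rewrite !edge_X.
case: (Hg u v uv) => // uvX; exfalso; move: wX.
by rewrite -uvX in_fset3 (negbTE wc) /= => /orP[]/eqP; apply: not_vertex.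
Qed.

Lemma cone_copy_add_leaf {l} {S : {fset nat} -> Prop} {c x y w : nat}
    {f : 'I_l.+2 -> nat} :
  cone_copy (khat l) S c f -> f (main0 l) = x -> f (main1 l) = y ->
  (forall v, f v != w) -> w != c -> S [fset c; x; w] -> S [fset c; y; w] ->
  exists g, cone_copy (khat l.+1) S c g.
Proof.
move=> [fi [fc Hf]] fx fy fw wc Sx Sy.
have Smain u : val u < 2 -> S [fset c; f u; w].
  by case/main_cases => ->; rewrite ?fx ?fy.
have main_of_max u : khat l.+1 (lift ord_max u) ord_max -> val u < 2.
  by rewrite khatE lift_max /=; lia.
exists (fun i => if unlift ord_max i is Some j then f j else w).
split; [|split].
- move=> i j; case: unliftP => [i' ->|->]; case: unliftP => [j' ->|->] //.
  + by move/fi ->.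
  + by move=> E; move: (fw i'); rewrite E eqxx.
  + by move=> E; move: (fw j'); rewrite E eqxx.
- by move=> i; case: unliftP => [i' _|_]; [exact: fc | exact/eqP].
- move=> u v; case: unliftP => [u' ->|->]; case: unliftP => [v' ->|->].
  + by rewrite khat_lift_max => /Hf.
  + by move/main_of_max/Smain.
  + by rewrite khat_sym fset3C => /main_of_max/Smain.
  + by move/khat_neq; rewrite eqxx.
Qed.

Definition has_K23 (S : {fset nat} -> Prop) (c x : nat) : Prop :=
  exists f : 'I_(3.+2) -> nat,
    cone_copy (khat 3) S c f /\ (f (main0 3) = x \/ f (main1 3) = x).

Lemma has_K23_mono {S S' : {fset nat} -> Prop} {c x : nat} :
  (forall e, S e -> S' e) -> has_K23 S c x -> has_K23 S' c x.
Proof. by move=> SS' [f [fS fx]]; exists f; split=> //; exact: cone_copy_mono fS. Qed.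

Lemma has_K23_fresh {S : {fset nat} -> Prop} {X : {fset nat}} {w c x : nat} :
  (forall e, S e -> w \notin e) -> w \in X -> w != c ->
  has_K23 (fun e => S e \/ e = X) c x -> has_K23 S c x.
Proof.
by move=> Sw wX wc [f [fS fx]]; exists f; split=> //; exact: cone_copy_fresh Sw wX wc fS.
Qed.

Definition blocked (SA SB : {fset nat} -> Prop) : Prop :=
  forall c (f : 'I_(4.+2) -> nat) e,
    cone_copy (khat 4) (fun e' => SA e' \/ e' = e) c f -> SB e.

Lemma blocked_anti {SA SA' SB : {fset nat} -> Prop} :
  (forall e, SA' e -> SA e) -> blocked SA SB -> blocked SA' SB.
Proof.
move=> SA'A bl c f e fcopy; apply: (bl c f); apply: cone_copy_mono fcopy.
by move=> e' [/SA'A|]; auto.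
Qed.

Lemma blocked_mono {SA SB SB' : {fset nat} -> Prop} :
  (forall e, SB e -> SB' e) -> blocked SA SB -> blocked SA SB'.
Proof. by move=> SBB' bl c f e /bl /SBB'. Qed.

Lemma blocked_no_K24 {SA SB S : {fset nat} -> Prop} {e : {fset nat}} :
  blocked SA SB -> ~ SB e -> (forall e', S e' -> SA e' \/ e' = e) -> ~ has_K24 S.
Proof. by move=> bl nSB SA_e [c [f /(cone_copy_mono SA_e)/bl]]. Qed.

Lemma blocked_init {A B : {fset {fset nat}}} :
  ~ threat A B -> ~ has_K24 (fun e => e \in A) ->
  blocked (fun e => e \in A) (fun e => e \in B).
Proof.
move=> nthreat nK c f e fcopy; have [fi [fc Hf]] := fcopy.
case: (boolP (e \in B)) => // eB; exfalso.
case: (boolP (e \in A)) => eA.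
  by apply: nK; exists c, f; apply: cone_copy_mono fcopy => e' [|->].
case: (classic (exists u v, khat 4 u v /\ e = [fset c; f u; f v])) => [edge|nedge].
  apply: nthreat; exists c, f, e; do 5 split=> //.
  by move=> u v uv ne; case: (Hf u v uv).
apply: nK; exists c, f; split=> //; split=> // u v uv.
by case: (Hf u v uv) => // E; case: nedge; exists u, v.
Qed.

Section AddFreshAnswer.

Context {SA : {fset nat} -> Prop} {c x w : nat}.
Hypothesis SA_fresh : forall e, SA e -> w \notin e.

Let X := [fset c; x; w].

Section NearCopy.

Context {c' : nat} {f : 'I_(4.+2) -> nat} {e : {fset nat}}.
Hypothesis fcopy : cone_copy (khat 4) (fun e' => (SA e' \/ e' = X) \/ e' = e) c' f.

Lemma edge_through_fresh u v : khat 4 u v -> w \in [fset c'; f u; f v] ->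
  [fset c'; f u; f v] = X \/ [fset c'; f u; f v] = e.
Proof.
move=> uv wuv; have [_ [_ Hf]] := fcopy.
by case: (Hf u v uv) => [[/SA_fresh|]|]; [rewrite wuv | left | right].
Qed.

(* The centre and the main vertices lie in at least three edges, but only [X]
   and [e] can contain [w]. *)
Lemma fresh_off_main t : val t < 2 -> w \notin [fset c'; f t].
Proof.
move=> ht; apply/negP => wt; have [fi [fc _]] := fcopy.
pose E k := [fset c'; f t; f k].
have edge k : 1 < val k -> E k = X \/ E k = e.
  move=> hk; apply: edge_through_fresh; first exact: khat_main_leaf.
  by move: wt; rewrite in_fset2 in_fset3 => /orP[]->; rewrite ?orbT.
have E_inj (k k' : 'I_(4.+2)) : E k = E k' -> 1 < val k -> val k = val k'.
  move=> /(cone_edge_inj fi fc) + hk => -> //.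
  by apply: contraTneq hk => ->; rewrite -leqNgt.
have leaf n : 1 < n < 6 -> 1 < val (inord n : 'I_(4.+2)).
  by case/andP=> n1 n6; rewrite /= inordK.
apply: (three_in_pair _ _ _ (edge (inord 2) (leaf 2 _)) (edge (inord 3) (leaf 3 _))
                             (edge (inord 4) (leaf 4 _))) => // /E_inj;
  by rewrite /= !inordK // => /(_ isT).
Qed.

Lemma leaf_edges {t} : 1 < val t -> w = f t ->
  (exists2 m, val m < 2 & [fset c'; f t; f m] = X) /\ w \in e.
Proof.
move=> ht wt; have [fi [fc _]] := fcopy.
pose E k := [fset c'; f t; f k].
have edge m : val m < 2 -> E m = X \/ E m = e.
  move=> hm; apply: edge_through_fresh; first by rewrite khat_sym khat_main_leaf.
  by rewrite wt in_fset3 eqxx orbT.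
have E01 : E (main0 4) <> E (main1 4).
  move=> E01; suff /(congr1 val) : main0 4 = main1 4 by [].
  exact: cone_edge_inj fi fc (khat_neq (khat_main_leaf (u := main0 4) isT ht)) E01.
have we m : E m = e -> w \in e by move <-; rewrite wt in_fset3 eqxx orbT.
case: (edge (main0 4) isT) (edge (main1 4) isT) => [E0|E0] [E1|E1].
- by case: E01; rewrite E0 E1.
- by split; [exists (main0 4) | exact: we E1].
- by split; [exists (main1 4) | exact: we E0].
- by case: E01; rewrite E0 E1.
Qed.

Lemma leaf_deleted_copy {t} : 1 < val t -> w = f t -> w \in e ->
  cone_copy (khat 3) SA c' (fun i => f (lift t i)).
Proof.
move=> ht wt we; have [fi [fc Hf]] := fcopy.
split; first by move=> i j /fi /lift_inj.
split=> [i|i j ij]; first exact: fc.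
have wg : w \notin [fset c'; f (lift t i); f (lift t j)].
  have ftc : f t != c' by apply/eqP/fc.
  by rewrite in_fset3 wt (negbTE ftc) !(inj_eq fi) !(negbTE (neq_lift t _)).
case: (Hf _ _ (khat_lift ht ij)) => [[//|]|] edgeE; move: wg;
  by rewrite edgeE ?we // fset33.
Qed.

Lemma fresh_off_leaf t : 1 < val t -> w = f t -> has_K23 SA c x \/ has_K23 SA x c.
Proof.
move=> ht wt; have [fi [fc _]] := fcopy.
have [[m hm Xm] we] := leaf_edges ht wt.
have gSA := leaf_deleted_copy ht wt we.
have gm : f (lift t (main0 3)) = f m \/ f (lift t (main1 3)) = f m.
  by rewrite lift_main0 // lift_main1 //; case: (main_cases hm) => ->; auto.
have inX z : z \in [fset c'; f t; f m] -> z \in X by rewrite Xm.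
have c'w : c' != w by rewrite wt eq_sym; apply/eqP/fc.
have fmw : f m != w.
  by rewrite wt (inj_eq fi); apply: contraTneq hm => ->; rewrite -leqNgt.
have c'fm : c' != f m by rewrite eq_sym; apply/eqP/fc.
have [[c'c fmx]|[c'x fmc]] :=
  fset3_pair (inX c' (fset31 _ _ _)) (inX (f m) (fset33 _ _ _)) c'w fmw c'fm.
- by left; exists (fun i => f (lift t i)); rewrite -c'c -fmx.
- by right; exists (fun i => f (lift t i)); rewrite -c'x -fmc.
Qed.

End NearCopy.

Lemma blocked_add_answer {SB : {fset nat} -> Prop} :
  blocked SA SB -> ~ has_K23 SA c x -> ~ has_K23 SA x c ->
  blocked (fun e => SA e \/ e = X) SB.
Proof.
move=> bl nK23cx nK23xc c' f e fcopy.
case: (eqVneq w c') => [wc'|wc'].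
  by case/negP: (fresh_off_main fcopy (main0 4) isT); rewrite wc' fset21.
case: (pickP (fun t => f t == w)) => [t /eqP ft|nof].
  case: (ltnP (val t) 2) => ht.
    by case/negP: (fresh_off_main fcopy t ht); rewrite -ft fset22.
  by case: (fresh_off_leaf fcopy t ht (esym ft)).
have [fi [fc Hf]] := fcopy; apply: (bl c' f e); split=> //; split=> // u v uv.
case: (Hf u v uv) => [[|XE]|]; [by left | exfalso | by right].
move: (fset33 c x w); rewrite -/X -XE in_fset3 (negbTE wc') /=.
by rewrite !(eq_sym w) !nof.
Qed.

End AddFreshAnswer.

Definition max_vertex (s : seq {fset nat}) : nat := \max_(e <- s) \max_(v <- e) v.

Lemma leq_max_vertex {s : seq {fset nat}} {e : {fset nat}} {v : nat} :
  e \in s -> v \in e -> v <= max_vertex s.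
Proof.
move=> es ve; apply: leq_trans (leq_bigmax_seq e es isT).
exact: (leq_bigmax_seq v ve isT).
Qed.

Lemma max_vertex_mkseq (p : nat -> {fset nat}) {j k : nat} :
  j <= k -> max_vertex (mkseq p j) <= max_vertex (mkseq p k).
Proof.
elim: k => [|k IH]; first by rewrite leqn0 => /eqP ->.
rewrite leq_eqVlt ltnS => /predU1P[-> //|/IH jk].
by rewrite mkseqS -cats1 {2}/max_vertex big_cat leq_max jk.
Qed.

Lemma mem_mkseq {p : nat -> {fset nat}} {i j} : i < j -> p i \in mkseq p j.
Proof. by move=> ij; apply: map_f; rewrite mem_iota. Qed.

Lemma take_mkseq {p : nat -> {fset nat}} {j k} : j <= k -> take j (mkseq p k) = mkseq p j.
Proof. by move=> jk; rewrite /mkseq -map_take take_iota (minn_idPl jk). Qed.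

Lemma find_iota (a : pred nat) n j :
  j <= n -> (forall i, i < j -> ~~ a i) -> (j < n -> a j) -> find a (iota 0 n) = j.
Proof.
move=> jn before at_j.
have find_le : find a (iota 0 n) <= n by rewrite -{2}(size_iota 0 n) find_size.
case: (ltngtP (find a (iota 0 n)) j) => // [lt|gt].
- have has_a : has a (iota 0 n) by rewrite has_find size_iota (leq_trans lt jn).
  have := nth_find 0 has_a.
  by rewrite nth_iota ?(leq_trans lt jn) //= (negbTE (before _ lt)).
- have := before_find 0 gt; rewrite nth_iota ?(leq_trans gt find_le) //= at_j //.
  exact: leq_trans gt find_le.
Qed.

Lemma ownA_succ A p j e : ownA A p j.+1 e -> ownA A p j e \/ e = p j.
Proof.
case=> [eA|[i]]; first by left; left.
rewrite ltnS leq_eqVlt => /predU1P[-> <-|ij <-]; [by right | by left; right; exists i].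
Qed.

Lemma ownB_succ B str p j e :
  ownB B str p j.+1 e -> ownB B str p j e \/ e = p2move str p j.
Proof.
case=> [eB|[i]]; first by left; left.
rewrite ltnS leq_eqVlt => /predU1P[-> <-|ij <-]; [by right | by left; right; exists i].
Qed.

Section Strategy.

Variables (A B : {fset {fset nat}}) (c x y : nat).

(* The [size s] summand makes fresh vertices strictly increase along a play. *)
Definition fresh_vertex (s : seq {fset nat}) : nat :=
  max_vertex A + max_vertex B + max_vertex s + c + x + y + size s + 1.

Definition deviation (s : seq {fset nat}) : nat :=
  find (fun j => nth fset0 s j != [fset c; x; fresh_vertex (take j s)])
       (iota 0 (size s)).

(* Attack with [c; y; w] for a fresh w; once P1 has left the attack number
   [deviation s] unanswered, claim the answer she missed. *)
Definition strategy (s : seq {fset nat}) : {fset nat} :=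
  if deviation s < size s then [fset c; x; fresh_vertex (take (deviation s) s)]
  else [fset c; y; fresh_vertex s].

Section Play.

Variable p : nat -> {fset nat}.

Local Notation fresh j := (fresh_vertex (mkseq p j)).

Definition answered (k : nat) : Prop := forall j, j < k -> p j = [fset c; x; fresh j].

Lemma deviation_mkseq {j k} : j <= k -> answered j ->
  (j < k -> p j != [fset c; x; fresh j]) -> deviation (mkseq p k) = j.
Proof.
move=> jk ans dev; rewrite /deviation size_mkseq; apply: find_iota => // [i ij|jk'].
  have ik : i < k := leq_trans ij jk.
  by rewrite negbK (nth_mkseq _ _ ik) (take_mkseq (ltnW ik)); apply/eqP/ans.
by rewrite (nth_mkseq _ _ jk') (take_mkseq (ltnW jk')); apply: dev.
Qed.

Lemma p2move_attack k : answered k -> p2move strategy p k = [fset c; y; fresh k].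
Proof.
move=> ans; rewrite /p2move /strategy (deviation_mkseq (leqnn k) ans).
  by rewrite size_mkseq ltnn.
by rewrite ltnn.
Qed.

Lemma p2move_punish {j k} : j < k -> answered j -> p j != [fset c; x; fresh j] ->
  p2move strategy p k = [fset c; x; fresh j].
Proof.
move=> jk ans dev.
rewrite /p2move /strategy (deviation_mkseq (ltnW jk) ans (fun _ => dev)).
by rewrite size_mkseq jk (take_mkseq (ltnW jk)).
Qed.

Lemma fresh_neq j : [/\ fresh j != c, fresh j != x & fresh j != y].
Proof. by rewrite /fresh_vertex; split; lia. Qed.

Lemma fresh_mono i j : i < j -> fresh i < fresh j.
Proof.
move=> ij; have := max_vertex_mkseq p (ltnW ij).
rewrite /fresh_vertex !size_mkseq; lia.
Qed.

Lemma fresh_notin_A {j e} : e \in A -> fresh j \notin e.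
Proof. by move=> eA; apply/negP => /(leq_max_vertex eA); rewrite /fresh_vertex; lia. Qed.

Lemma fresh_notin_B {j e} : e \in B -> fresh j \notin e.
Proof. by move=> eB; apply/negP => /(leq_max_vertex eB); rewrite /fresh_vertex; lia. Qed.

Lemma fresh_notin_ownA {j e} : ownA A p j e -> fresh j \notin e.
Proof.
case=> [/fresh_notin_A //|[i ij <-]]; apply/negP.
by move=> /(leq_max_vertex (mem_mkseq ij)); rewrite /fresh_vertex; lia.
Qed.

Lemma fresh_notin_ownB {k e} : answered k -> ownB B strategy p k e -> fresh k \notin e.
Proof.
move=> ans [/fresh_notin_B //|[i ik <-]].
have [fc _ fy] := fresh_neq k.
rewrite p2move_attack => [|j ji]; last by apply: ans; exact: ltn_trans ik.
by rewrite in_fset3 (negbTE fc) (negbTE fy) /= gtn_eqF // fresh_mono.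
Qed.

Lemma first_deviation k : ~ answered k ->
  exists j, [/\ j < k, answered j & p j != [fset c; x; fresh j]].
Proof.
move=> nans.
have ex : exists j, (j < k) && (p j != [fset c; x; fresh j]).
  apply: NNPP => nex; apply: nans => j jk; apply/eqP; apply: contra_notT nex => dev.
  by exists j; rewrite jk dev.
case: (ex_minnP ex) => j /andP[jk dev] jmin; exists j; split=> // i ij.
apply/eqP; apply: (contraTT _ ij) => devi; rewrite -leqNgt; apply: jmin.
by rewrite (ltn_trans ij jk) devi.
Qed.

Lemma answered_blocked k :
  ~ threat A B -> ~ has_K24 (fun e => e \in A) ->
  ~ has_K23 (fun e => e \in A) c x -> ~ has_K23 (fun e => e \in A) x c ->
  answered k -> blocked (ownA A p k) (ownB B strategy p k.+1).
Proof.
move=> nthreat nK nK23cx nK23xc ans.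
suff inv j : j <= k -> [/\ blocked (ownA A p j) (ownB B strategy p k.+1),
    ~ has_K23 (ownA A p j) c x & ~ has_K23 (ownA A p j) x c].
  by case: (inv k (leqnn k)).
elim: j => [_|j IH jk].
  have A0 e : ownA A p 0 e -> e \in A by case=> // [[]].
  split; [| by move/(has_K23_mono A0) | by move/(has_K23_mono A0)].
  by apply: blocked_mono _ (blocked_anti A0 (blocked_init nthreat nK)) => e eB; left.
have [bl nK23cx' nK23xc'] := IH (ltnW jk).
have [fc fx _] := fresh_neq j.
have step e : ownA A p j.+1 e -> ownA A p j e \/ e = [fset c; x; fresh j].
  by rewrite -(ans j jk); exact: ownA_succ.
have fr e : ownA A p j e -> fresh j \notin e := fresh_notin_ownA.
split.
- exact: blocked_anti step (blocked_add_answer fr bl nK23cx' nK23xc').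
- by move/(has_K23_mono step)/(has_K23_fresh fr (fset33 _ _ _) fc).
- by move/(has_K23_mono step)/(has_K23_fresh fr (fset33 _ _ _) fx).
Qed.

Hypothesis cxy : [/\ c != x, c != y & x != y].

Lemma legal2_attack k : answered k -> legal2 A B strategy p k.
Proof.
move=> ans; have [cx cy xy] := cxy; have [fc fx fy] := fresh_neq k.
rewrite /legal2 p2move_attack //; split; first by rewrite /edge3 cardfs3 // eq_sym.
split; first by move/fresh_notin_ownA; rewrite fset33.
by move/(fresh_notin_ownB ans); rewrite fset33.
Qed.

Lemma legal2_punish j : answered j -> p j != [fset c; x; fresh j] ->
  legal2 A B strategy p j.+1.
Proof.
move=> ans dev; have [cx cy xy] := cxy; have [fc fx fy] := fresh_neq j.
rewrite /legal2 (p2move_punish (ltnSn j)) //.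
split; first by rewrite /edge3 cardfs3 // eq_sym.
split.
  by case/ownA_succ => [/fresh_notin_ownA|pj]; [rewrite fset33 | rewrite pj eqxx in dev].
case/ownB_succ => [/(fresh_notin_ownB ans)|]; first by rewrite fset33.
rewrite p2move_attack // (fset3C c x) (fset3C c y) => E.
by case/eqP: xy; apply: fset3_inj E; rewrite // eq_sym.
Qed.

Lemma punish_wins f3 j k :
  cone_copy (khat 3) (fun e => e \in B) c f3 ->
  (f3 (main0 3) = x /\ f3 (main1 3) = y) \/ (f3 (main0 3) = y /\ f3 (main1 3) = x) ->
  answered j -> p j != [fset c; x; fresh j] -> j.+1 < k ->
  has_K24 (ownB B strategy p k).
Proof.
move=> f3B mains ans dev jk.
have inB e : e \in B -> ownB B strategy p k e by left.
have attack : ownB B strategy p k [fset c; y; fresh j].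
  by right; exists j; [exact: ltn_trans jk | exact: p2move_attack].
have punish : ownB B strategy p k [fset c; x; fresh j].
  by right; exists j.+1 => //; exact: p2move_punish.
have f3w v : f3 v != fresh j.
  have [u [u' [_ vu _]]] := khat_two_nbrs v; have [_ [_ Hf3]] := f3B.
  apply: contraTneq (fresh_notin_B (j := j) (Hf3 _ _ vu)) => <-.
  by rewrite negbK in_fset3 eqxx orbT.
have [fc _ _] := fresh_neq j.
have f3S := cone_copy_mono inB f3B.
exists c; case: mains => [[f0 f1]|[f0 f1]].
  exact: cone_copy_add_leaf f3S f0 f1 f3w fc punish attack.
exact: cone_copy_add_leaf f3S f0 f1 f3w fc attack punish.
Qed.

End Play.
End Strategy.

Theorem lemma3p2 (A B : {fset {fset nat}}) (c x y : nat) :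
  (forall e, e \in A -> edge3 e) -> (forall e, e \in B -> edge3 e) ->
  [disjoint A & B] ->
  ~ has_K24 (fun e => e \in A) -> ~ has_K24 (fun e => e \in B) ->
  #|` A| = (#|` B|).+1 ->
  (exists f : 'I_(3.+2) -> nat,
     cone_copy (khat 3) (fun e => e \in B) c f /\
     ((f (main0 3) = x /\ f (main1 3) = y) \/
      (f (main0 3) = y /\ f (main1 3) = x))) ->
  ~ threat A B ->
  ~ (exists f : 'I_(3.+2) -> nat,
       cone_copy (khat 3) (fun e => e \in A) c f /\
       (f (main0 3) = x \/ f (main1 3) = x)) ->
  ~ (exists f : 'I_(3.+2) -> nat,
       cone_copy (khat 3) (fun e => e \in A) x f /\
       (f (main0 3) = c \/ f (main1 3) = c)) ->
  exists str : seq {fset nat} -> {fset nat}, drawing_strategy A B str.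
Proof.
move=> _ _ _ nKA _ _ [f3 [f3B mains]] nthreat nK23cx nK23xc.
have cxy : [/\ c != x, c != y & x != y].
  have [fi [fc _]] := f3B.
  have f01 : f3 (main0 3) != f3 (main1 3) by rewrite (inj_eq fi).
  have [f0c f1c] : f3 (main0 3) != c /\ f3 (main1 3) != c by split; apply/eqP/fc.
  by case: mains => [[<- <-]|[<- <-]]; split; rewrite // eq_sym.
exists (strategy A B c x y) => p k _ _ nKBk.
case: (classic (answered A B c x y p k)) => [ans|/first_deviation[j [jk ansj dev]]].
  split; first exact: legal2_attack.
  move=> _ [_ [_ pkB]]; apply: (blocked_no_K24 _ pkB (ownA_succ A p k)).
  exact: answered_blocked.
case: (ltnP j.+1 k) => [jk'|kj].
  by case: nKBk; apply: punish_wins f3B mains ansj dev jk'.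
have -> : k = j.+1 by apply/eqP; rewrite eqn_leq kj jk.
split; first exact: legal2_punish.
by case; apply: punish_wins f3B mains ansj dev _.
Qed.
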